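(* Let $\theta\in V_\Lambda$. Every $M\in\overline{\mathcal P}(\theta)$ has a unique strict subobject $M_0$ such that $M_0\in\mathcal P(\theta)$ and $M/M_0\in\mathcal W(\theta)$. Moreover $\mathcal P(\theta)^\perp\cap\overline{\mathcal P}(\theta)=\mathcal W(\theta)$, and $\overline{\mathcal P}(\theta)$ is the smallest pseudo-torsion class containing $\mathcal P(\theta)\cup\mathcal W(\theta)$.
   Context: Let $\Lambda$ be a finite dimensional algebra over a field with $n$ isoclasses of simple modules, and $\mathrm{mod}\text-\Lambda$ the category of finitely generated right $\Lambda$-modules. Fix a torsion class $\mathcal G\subseteq\mathrm{mod}\text-\Lambda$ (closed under isomorphisms, extensions and quotients). For $B\in\mathcal G$, a subobject of $B$ is a submodule in $\mathcal G$; a subobject $A\subseteq B$ is strict if $A\cap B'\in\mathcal G$ for every subobject $B'$ of $B$; a strict quotient of $B$ is $B/A$ with $A$ a strict subobject. A short exact sequence in $\mathcal G$ is strict exact if its first term is a strict subobject of its middle term. A strict morphism is a homomorphism $f:A\to B$ with $A,B\in\mathcal G$ such that $\ker f\in\mathcal G$ is a strict subobject of $A$ and $\operatorname{im} f$ is a strict subobject of $B$. A pseudo-torsion class is a nonempty class $\mathcal P\subseteq\mathcal G$ closed under strict quotients and strict extensions. For $\mathcal X\subseteq\mathcal G$, $\mathcal X^\perp$ is the class of $Y\in\mathcal G$ such that every strict morphism $X\to Y$ with $X\in\mathcal X$ is zero. Let $V_\Lambda=\mathrm{Hom}_{\mathbb Z}(K_0\Lambda,\mathbb R)\cong\mathbb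 R^n$; $\theta(M)$ denotes $\theta$ applied to the dimension vector of $M$. $\mathcal P(\theta)$ = $\{0\}$ together with all nonzero $M\in\mathcal G$ with $\theta(M'')>0$ for every nonzero strict quotient $M''$ of $M$ (including $M$); $\overline{\mathcal P}(\theta)$ = all $M\in\mathcal G$ with $\theta(M'')\ge0$ for every strict quotient $M''$ of $M$. $\mathcal W(\theta)$ is the class of $X\in\mathcal G$ with $\theta(X)=0$ and $\theta(X')\le0$ for every strict subobject $X'$ of $X$. *)

From HB Require Import structures.
From mathcomp Require Import all_boot all_order all_algebra.
From mathcomp Require Import falgebra mxrepresentation.
From mathcomp Require Import reals.
Set Implicit Arguments. Set Strict Implicit. Unset Printing Implicit Defensive.
Import Order.TTheory GRing.Theory Num.Theory.
Local Open Scope ring_scope.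

Section Modules.
Variables (F : fieldType) (A : falgType F).

(* A finite-dimensional right A-module: F^d (row vectors) with right action
   v . a := v *m mact a. *)
Record rmodule := RModule { mdim : nat; mact : A -> 'M[F]_mdim }.

Definition is_rmod (M : rmodule) : Prop :=
  [/\ (forall a b, mact M (a + b) = mact M a + mact M b),
      (forall (c : F) a, mact M (c *: a) = c *: mact M a),
      mact M 1 = 1%:M &
      (forall a b, mact M (a * b) = mact M a *m mact M b)].

Definition is_submod (M : rmodule) (U : 'M[F]_(mdim M)) : Prop :=
  forall a, (U *m mact M a <= U)%MS.

Definition submod (M : rmodule) (U : 'M[F]_(mdim M)) : rmodule :=
  @RModule (\rank U) (fun a => in_submod U (@val_submod _ _ U _ 1%:M *m mact M a)).

Definition quotmod (M : rmodule) (U : 'M[F]_(mdim M)) : rmodule :=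
  @RModule _ (fun a => in_factmod U (@val_factmod _ _ U _ 1%:M *m mact M a)).

Definition is_hom (M N : rmodule) (f : 'M[F]_(mdim M, mdim N)) : Prop :=
  forall a, mact M a *m f = f *m mact N a.

Definition is_iso (M N : rmodule) : Prop :=
  exists f : 'M[F]_(mdim M, mdim N), [/\ is_hom M N f, row_free f & row_full f].

Definition zeromod : rmodule := @RModule 0 (fun _ => 0).

Definition mclass := rmodule -> Prop.

Definition torsion_class (G : mclass) : Prop :=
  [/\ (forall M, G M -> is_rmod M),
      G zeromod,
      (forall M N, G M -> is_iso M N -> G N),
      (forall M U, G M -> is_submod M U -> G (quotmod M U)) &
      (forall M U, is_rmod M -> is_submod M U ->
         G (submod M U) -> G (quotmod M U) -> G M)].

Variable G : mclass.

Definition subobj (B : rmodule) (U : 'M[F]_(mdim B)) : Prop :=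
  is_submod B U /\ G (submod B U).

Definition strict_subobj (B : rmodule) (U : 'M[F]_(mdim B)) : Prop :=
  subobj B U /\ (forall B' : 'M[F]_(mdim B), subobj B B' -> G (submod B (U :&: B')%MS)).

Definition strict_morph (M N : rmodule) (f : 'M[F]_(mdim M, mdim N)) : Prop :=
  [/\ G M, G N, is_hom M N f, strict_subobj M (kermx f) & strict_subobj N (<<f>>)%MS].

Definition perp (X : mclass) : mclass := fun Y =>
  G Y /\ forall M (f : 'M[F]_(mdim M, mdim Y)), X M -> strict_morph M Y f -> f = 0.

Definition pseudo_torsion (P : mclass) : Prop :=
  [/\ (exists M, P M),
      (forall M, P M -> G M),
      (forall M N, P M -> is_iso M N -> P N),
      (forall M U, P M -> strict_subobj M U -> P (quotmod M U)) &
      (forall M U, G M -> strict_subobj M U ->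
         P (submod M U) -> P (quotmod M U) -> P M)].

Variable R : realType.

(* theta in V_Lambda = Hom(K_0 Lambda, R), viewed as a function on modules:
   iso-invariant and additive on short exact sequences. *)
Definition additive_fun (theta : rmodule -> R) : Prop :=
  (forall M N, is_rmod M -> is_iso M N -> theta M = theta N) /\
  (forall M (U : 'M[F]_(mdim M)), is_rmod M -> is_submod M U ->
     theta M = theta (submod M U) + theta (quotmod M U)).

Variable theta : rmodule -> R.

Definition Ptheta : mclass := fun M =>
  G M /\ (mdim M = 0%N \/
    forall U : 'M[F]_(mdim M), strict_subobj M U ->
      mdim (quotmod M U) != 0%N -> 0 < theta (quotmod M U)).

Definition Pbar : mclass := fun M =>
  G M /\ forall U : 'M[F]_(mdim M), strict_subobj M U -> 0 <= theta (quotmod M U).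

Definition Wtheta : mclass := fun X =>
  [/\ G X, theta X = 0 &
      forall U : 'M[F]_(mdim X), strict_subobj X U -> theta (submod X U) <= 0].

End Modules.

Arguments Ptheta {F A} G {R} theta M.
Arguments Pbar {F A} G {R} theta M.
Arguments Wtheta {F A} G {R} theta X.
Arguments additive_fun {F A R} theta.

From HB Require Import structures.
From mathcomp Require Import all_boot all_order all_algebra.
From mathcomp Require Import falgebra mxrepresentation.
From mathcomp Require Import boolp reals.
Set Implicit Arguments. Unset Strict Implicit. Unset Printing Implicit Defensive.
Import Order.TTheory GRing.Theory Num.Theory.
Local Open Scope ring_scope.

(* Everything is transported into the submodule lattice of a single ambient module [M]:
   a module [N] presented as a subquotient [W / U] of [M] has its
   strict subobjects, its membership in [G] and its [theta] read off from submodules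
   [V] with [U <= V <= W], and the torsion-class axioms and the additivity of [theta]
   become statements about the isomorphism theorems in that lattice.  There, for [M] in
   [Pbar(theta)], the part [M_0] is a minimal strict subobject [V] with [theta (M / V) = 0],
   which exists by induction on the rank. *)

Section CongruenceModuloRowSpace.
Variables (F : fieldType) (p n : nat) (U : 'M[F]_(p, n)).

Definition congmx m (X Y : 'M[F]_(m, n)) := (X - Y <= U)%MS.

Lemma congmx_refl m (X : 'M[F]_(m, n)) : congmx X X.
Proof. by rewrite /congmx subrr sub0mx. Qed.

Lemma congmx_sym m (X Y : 'M[F]_(m, n)) : congmx X Y -> congmx Y X.
Proof. by rewrite /congmx -opprB eqmx_opp. Qed.

Lemma congmx_trans m (X Y Z : 'M[F]_(m, n)) :
  congmx X Y -> congmx Y Z -> congmx X Z.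
Proof. by move=> hXY hYZ; rewrite /congmx -(subrK Y X) -addrA; apply: addmx_sub. Qed.

Lemma congmxD m (X1 X2 Y1 Y2 : 'M[F]_(m, n)) :
  congmx X1 Y1 -> congmx X2 Y2 -> congmx (X1 + X2) (Y1 + Y2).
Proof. by move=> h1 h2; rewrite /congmx opprD addrACA; apply: addmx_sub. Qed.

Lemma congmxZ m c (X Y : 'M[F]_(m, n)) : congmx X Y -> congmx (c *: X) (c *: Y).
Proof. by rewrite /congmx -scalerBr; apply: submx_trans (scalemx_sub _ _). Qed.

Lemma congmxMl m k (C : 'M[F]_(k, m)) (X Y : 'M[F]_(m, n)) :
  congmx X Y -> congmx (C *m X) (C *m Y).
Proof. by rewrite /congmx -mulmxBr; apply: mulmx_sub. Qed.

Lemma congmx_sub p' (C : 'M[F]_(p', n)) m (X Y : 'M[F]_(m, n)) :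
  congmx X Y -> (U <= C)%MS -> (Y <= C)%MS -> (X <= C)%MS.
Proof.
by move=> h sUC sYC; rewrite -(subrK Y X); apply: addmx_sub => //; apply: submx_trans h sUC.
Qed.

Lemma congmx_adds m (X Y : 'M[F]_(m, n)) : congmx X Y -> (X <= Y + U)%MS.
Proof. by move=> h; rewrite -(subrK Y X) addrC; apply: addmx_sub_adds. Qed.

Lemma congmx_decomp k (g : 'M[F]_(k, n)) m (X : 'M[F]_(m, n)) :
  (X <= g + U)%MS -> exists c : 'M[F]_(m, k), congmx X (c *m g).
Proof.
move=> /sub_addsmxP [[u1 u2] /= ->].
by exists u1; rewrite /congmx addrC addKr submxMl.
Qed.

Definition row_free_mod k (g : 'M[F]_(k, n)) :=
  forall m (x : 'M[F]_(m, k)), (x *m g <= U)%MS -> x = 0.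

Lemma row_free_mod_inj k (g : 'M[F]_(k, n)) m (X Y : 'M[F]_(m, k)) :
  row_free_mod g -> congmx (X *m g) (Y *m g) -> X = Y.
Proof.
move=> fg h; apply/eqP; rewrite -subr_eq0; apply/eqP; apply: fg.
by rewrite mulmxBl.
Qed.

End CongruenceModuloRowSpace.

Lemma congmxW (F : fieldType) p p' n (U : 'M[F]_(p, n)) (U' : 'M[F]_(p', n))
    m (X Y : 'M[F]_(m, n)) :
  (U <= U')%MS -> congmx U X Y -> congmx U' X Y.
Proof. by move=> sUU' h; apply: submx_trans h sUU'. Qed.

Lemma submx_minimal (F : fieldType) m n (P : 'M[F]_(m, n) -> Prop) V : P V ->
  exists2 V0, P V0 & forall X, P X -> (X <= V0)%MS -> (V0 <= X)%MS.
Proof.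
elim: {V}(\rank V).+1 {-2}V (ltnSn (\rank V)) => // k IH V rV PV.
have [[X [PX sXV nVX]] | noX] := EM (exists X, [/\ P X, (X <= V)%MS & ~~ (V <= X)%MS]).
  apply: (IH X) => //; rewrite ltnS in rV; apply: leq_trans rV.
  by rewrite (ltn_leqif (mxrank_leqif_sup sXV)).
exists V => // X PX sXV; apply/negPn/negP => nVX.
by apply: noX; exists X; split=> //; apply/negP.
Qed.

Section SubquotientPresentation.
Variables (F : fieldType) (A : falgType F) (M : rmodule A).
Local Notation n := (mdim M).

(* [g] induces an isomorphism of [N] onto the subquotient [V / U] of [M]. *)
Definition subquot_rep (U V : 'M[F]_n) (N : rmodule A) (g : 'M[F]_(mdim N, n)) :=
  [/\ (g <= V)%MS, (V <= g + U)%MS, row_free_mod U g &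
      forall a, congmx U (mact N a *m g) (g *m mact M a)].
Arguments subquot_rep U V N g : clear implicits.

Lemma is_submod0 : is_submod M 0.
Proof. by move=> a; rewrite mul0mx sub0mx. Qed.

Lemma is_submod1 : is_submod M 1%:M.
Proof. by move=> a; rewrite submx1. Qed.

Lemma is_submod_cap (X Y : 'M[F]_n) :
  is_submod M X -> is_submod M Y -> is_submod M (X :&: Y)%MS.
Proof.
move=> sX sY a; rewrite sub_capmx (submx_trans (submxMr _ (capmxSl _ _)) (sX a)).
exact: submx_trans (submxMr _ (capmxSr _ _)) (sY a).
Qed.

Lemma is_submod_adds (X Y : 'M[F]_n) :
  is_submod M X -> is_submod M Y -> is_submod M (X + Y)%MS.
Proof. by move=> sX sY a; rewrite addsmxMr; apply: addsmxS. Qed.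

Lemma congmxMr (U : 'M[F]_n) a m (X Y : 'M[F]_(m, n)) :
  is_submod M U -> congmx U X Y -> congmx U (X *m mact M a) (Y *m mact M a).
Proof.
by move=> sU h; rewrite /congmx -mulmxBl; apply: submx_trans (submxMr _ h) (sU a).
Qed.

Lemma is_hom_val_submod (N : rmodule A) (Y : 'M[F]_(mdim N)) :
  is_submod N Y -> is_hom (submod N Y) N (val_submod 1%:M).
Proof.
move=> sY a; rewrite /= -val_submodE in_submodK //.
exact: submx_trans (submxMr _ (val_submodP _)) (sY a).
Qed.

Section Presentation.
Variables (U W : 'M[F]_n) (N : rmodule A) (g : 'M[F]_(mdim N, n)).
Hypothesis rep : subquot_rep U W N g.

Lemma subquot_rep_le m (x : 'M[F]_(m, mdim N)) p (Y : 'M[F]_(p, mdim N)) :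
  (x *m g <= Y *m g + U)%MS -> (x <= Y)%MS.
Proof.
case: rep => _ _ fg _ /sub_addsmxP [[u1 u2] /= E].
suff -> : x = u1 *m Y by apply: submxMl.
by apply: (row_free_mod_inj fg); rewrite /congmx E -mulmxA addrC addKr submxMl.
Qed.

Lemma subquot_rep_decomp m (X : 'M[F]_(m, n)) :
  (X <= W)%MS -> exists c : 'M[F]_(m, mdim N), congmx U X (c *m g).
Proof. by case: rep => _ sW _ _ sX; apply: congmx_decomp (submx_trans sX sW). Qed.

Lemma subquot_rep_dim0 : (mdim N == 0%N) = (W <= U)%MS.
Proof.
case: rep => gW sW fg _; apply/eqP/idP => [eN | sWU].
  apply: submx_trans sW _; rewrite addsmx_sub submx_refl andbT.
  by move: g {gW fg}; rewrite eN => g0; rewrite (flatmx0 g0) sub0mx.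
have := fg _ 1%:M; rewrite mul1mx => /(_ (submx_trans gW sWU)) e1.
by have := mxrank1 F (mdim N); rewrite e1 mxrank0.
Qed.

Hypothesis sU : is_submod M U.

Lemma is_submod_rep_img (Y : 'M[F]_(mdim N)) :
  is_submod N Y -> is_submod M (Y *m g + U)%MS.
Proof.
case: rep => _ _ _ act sY a; rewrite addsmxMr addsmx_sub (submx_trans (sU a)) ?addsmxSr //.
rewrite andbT; apply: submx_trans (addsmxS (submxMr g (sY a)) (submx_refl U)).
apply: congmx_adds; rewrite -!mulmxA; exact/congmx_sym/congmxMl.
Qed.

Lemma is_submod_rep_preimg (V : 'M[F]_n) (Y : 'M[F]_(mdim N)) :
  is_submod M V -> (Y *m g <= V)%MS -> (V <= Y *m g + U)%MS -> is_submod N Y.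
Proof.
move=> sV sYV sVY a; apply: subquot_rep_le.
case: rep => _ _ _ act.
have e : congmx U (Y *m mact N a *m g) (Y *m g *m mact M a).
  by rewrite -!mulmxA; apply: congmxMl.
apply: congmx_sub e (addsmxSr _ _) _.
exact: submx_trans (submxMr _ sYV) (submx_trans (sV a) sVY).
Qed.

Lemma subquot_rep_submod (Y : 'M[F]_(mdim N)) : is_submod N Y ->
  subquot_rep U (Y *m g + U)%MS (submod N Y) (val_submod 1%:M *m g).
Proof.
case: (rep) => gW sW fg act sY; split.
- by apply: submx_trans (addsmxSl _ _); apply: submxMr; apply: val_submodP.
- by apply: addsmxS => //; apply: submxMr; rewrite val_submod1.
- move=> m x; rewrite mulmxA => /fg /eqP.
  by rewrite -val_submodE val_submod_eq0 => /eqP.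
- move=> a; rewrite mulmxA (is_hom_val_submod sY) -!(mulmxA (val_submod _)).
  by apply: congmxMl; apply: act.
Qed.

Lemma subquot_rep_quotmod (Y : 'M[F]_(mdim N)) : is_submod N Y ->
  subquot_rep (Y *m g + U)%MS W (quotmod N Y) (val_factmod 1%:M *m g).
Proof.
case: (rep) => gW sW fg act sY; split.
- exact: submx_trans (submxMl _ _) gW.
- apply: submx_trans sW _; rewrite addsmx_sub addsmxA addsmxSr andbT.
  rewrite -{1}[g]mul1mx -{1}(add_sub_fact_mod Y 1%:M) mulmxDl addrC.
  apply: submx_trans (addsmxSl _ U).
  apply: addmx_sub_adds; last by apply: submxMr; apply: val_submodP.
  by rewrite val_factmodE -mulmxA submxMl.
- move=> m x; rewrite mulmxA => /subquot_rep_le sxY.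
  have : (x *m val_factmod 1%:M <= Y :&: Y^C)%MS.
    by rewrite sub_capmx sxY -val_factmodE val_factmodP.
  by rewrite capmx_compl submx0 -val_factmodE val_factmod_eq0 => /eqP.
- move=> a; rewrite /= mulmxA -val_factmodE.
  set Z := val_factmod 1%:M *m mact N a.
  have eY : congmx (Y *m g) (val_factmod (in_factmod Y Z) *m g) (Z *m g).
    rewrite /congmx -mulmxBl; apply: submxMr.
    rewrite -[X in (_ - X)%R](add_sub_fact_mod Y Z) opprD addrCA subrr addr0 eqmx_opp.
    exact: val_submodP.
  have eU : congmx U (Z *m g) (val_factmod 1%:M *m g *m mact M a).
    by rewrite /Z -!(mulmxA (val_factmod _)); apply: congmxMl; apply: act.
  rewrite /congmx -(subrK (Z *m g) (val_factmod _ *m g)) -addrA.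
  exact: addmx_sub_adds.
Qed.

Lemma subquot_rep_cap (Y Z : 'M[F]_(mdim N)) :
  ((Y :&: Z) *m g + U == (Y *m g + U) :&: (Z *m g + U))%MS.
Proof.
apply/andP; split.
  by rewrite sub_capmx !addsmxS ?submxMr ?capmxSl ?capmxSr.
set C := ((Y *m g + U) :&: (Z *m g + U))%MS.
have [c e] : exists c, congmx U C (c *m g).
  by apply: congmx_decomp; apply: submx_trans (capmxSl _ _) (addsmxS (submxMl _ _) _).
have [cY cZ] : (c <= Y)%MS /\ (c <= Z)%MS.
  by split; apply: subquot_rep_le; apply: congmx_sub (congmx_sym e) (addsmxSr _ _) _;
    [apply: capmxSl | apply: capmxSr].
apply: congmx_sub e (addsmxSr _ _) _.
by apply: submx_trans (addsmxSl _ _); apply: submxMr; rewrite sub_capmx cY cZ.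
Qed.

End Presentation.

Lemma eqmx_subquot_rep (U V U' V' : 'M[F]_n) N g :
  (U == U')%MS -> (V == V')%MS -> subquot_rep U V N g -> subquot_rep U' V' N g.
Proof.
move=> /eqmxP eU /eqmxP eV [gV sV fg act]; split.
- by rewrite -eV.
- by rewrite -eV (submx_trans sV) // addsmxS ?eU.
- by move=> m x; rewrite -eU; apply: fg.
- by move=> a; rewrite /congmx -eU; apply: act.
Qed.

Lemma subquot_rep_id : subquot_rep 0 1%:M M 1%:M.
Proof.
split.
- exact: submx_refl.
- exact: addsmxSl.
- by move=> m x; rewrite mulmx1 submx0 => /eqP.
- by move=> a; rewrite mulmx1 mul1mx; apply: congmx_refl.
Qed.

Lemma subquot_rep_iso (U V : 'M[F]_n) N1 N2 g1 g2 : is_submod M U ->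
  subquot_rep U V N1 g1 -> subquot_rep U V N2 g2 -> is_iso N1 N2.
Proof.
move=> sU rep1 rep2; case: (rep1) => gV1 _ fg1 act1; case: (rep2) => gV2 _ fg2 act2.
have [h e1] := subquot_rep_decomp rep2 gV1; have [h' e2] := subquot_rep_decomp rep1 gV2.
have hh' : h *m h' = 1%:M.
  apply: (row_free_mod_inj fg1); rewrite mul1mx -mulmxA.
  exact: congmx_trans (congmxMl h (congmx_sym e2)) (congmx_sym e1).
have h'h : h' *m h = 1%:M.
  apply: (row_free_mod_inj fg2); rewrite mul1mx -mulmxA.
  exact: congmx_trans (congmxMl h' (congmx_sym e1)) (congmx_sym e2).
exists h; split; [move=> a | by apply/row_freeP; exists h' | by apply/row_fullP; exists h'].
apply: (row_free_mod_inj fg2); rewrite -!mulmxA.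
apply: congmx_trans (congmxMl _ (congmx_sym e1)) _.
apply: congmx_trans (act1 a) _.
apply: congmx_trans (congmxMr a sU e1) _.
by have := congmxMl h (congmx_sym (act2 a)); rewrite mulmxA.
Qed.

Lemma subquot_rep_rmod (U V : 'M[F]_n) N g : is_rmod M -> is_submod M U ->
  subquot_rep U V N g -> is_rmod N.
Proof.
move=> [actD actZ act1 actM] sU [_ _ fg act]; split.
- move=> a b; apply: (row_free_mod_inj fg); rewrite mulmxDl.
  apply: congmx_trans (act _) _; rewrite actD mulmxDr.
  by apply: congmxD; apply: congmx_sym.
- move=> c a; apply: (row_free_mod_inj fg); rewrite -scalemxAl.
  apply: congmx_trans (act _) _; rewrite actZ -scalemxAr.
  by apply: congmxZ; apply: congmx_sym.
- apply: (row_free_mod_inj fg); apply: congmx_trans (act _) _.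
  by rewrite act1 mulmx1 mul1mx; apply: congmx_refl.
- move=> a b; apply: (row_free_mod_inj fg); apply: congmx_trans (act _) _.
  have ea := congmxMr b sU (congmx_sym (act a)).
  have eb := congmxMl (mact N a) (congmx_sym (act b)).
  rewrite actM !mulmxA in ea eb *; exact: congmx_trans ea eb.
Qed.

(* The second isomorphism theorem [Y / (V :&: Y) ~ (Y + V) / V]. *)
Lemma subquot_rep_adds (V Y : 'M[F]_n) N g :
  subquot_rep (V :&: Y)%MS Y N g -> subquot_rep V (Y + V)%MS N g.
Proof.
case=> gY sY fg act; split.
- exact: submx_trans gY (addsmxSl _ _).
- by rewrite addsmx_sub addsmxSr andbT (submx_trans sY) // addsmxS ?capmxSl.
- move=> m x sxV; apply: fg; rewrite sub_capmx sxV.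
  exact: submx_trans (submxMl _ _) gY.
- by move=> a; apply: congmxW (act a); apply: capmxSl.
Qed.

Lemma subquot_rep_submod0 (U : 'M[F]_n) : is_submod M U ->
  subquot_rep 0 U (submod M U) (val_submod 1%:M).
Proof.
move=> sU; have := subquot_rep_submod subquot_rep_id sU.
by rewrite !mulmx1; apply: eqmx_subquot_rep; rewrite ?submx_refl //; apply/eqmxP; apply: addsmx0.
Qed.

Lemma subquot_rep_quotmod1 (U : 'M[F]_n) : is_submod M U ->
  subquot_rep U 1%:M (quotmod M U) (val_factmod 1%:M).
Proof.
move=> sU; have := subquot_rep_quotmod subquot_rep_id sU.
by rewrite !mulmx1; apply: eqmx_subquot_rep; rewrite ?submx_refl //; apply/eqmxP; apply: addsmx0.
Qed.

Definition subquot (U V : 'M[F]_n) := quotmod (submod M V) <<in_submod V U>>%MS.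

Lemma subquot_rep_subquot (U V : 'M[F]_n) :
  is_submod M U -> is_submod M V -> (U <= V)%MS ->
  subquot_rep U V (subquot U V) (val_factmod 1%:M *m val_submod 1%:M).
Proof.
move=> sU sV sUV; have repV := subquot_rep_submod0 sV.
have eU : (<<in_submod V U>>%MS *m val_submod 1%:M == U)%MS.
  apply/eqmxP; apply: eqmx_trans (eqmxMr _ (genmxE _)) _.
  by rewrite -val_submodE in_submodK.
have sUV' : is_submod (submod M V) <<in_submod V U>>%MS.
  case/andP: (eU) => le1 le2.
  by apply: (is_submod_rep_preimg repV sU) => //; rewrite addsmx0.
apply: eqmx_subquot_rep (subquot_rep_quotmod repV sUV'); rewrite ?submx_refl //.
by apply/eqmxP; apply: eqmx_trans (addsmx0 _ _) (eqmxP eU).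
Qed.

Lemma subquot_rep_image (X : rmodule A) (f : 'M[F]_(mdim X, n)) :
  is_hom X M f -> subquot_rep 0 <<f>>%MS (quotmod X (kermx f)) (val_factmod 1%:M *m f).
Proof.
move=> hf.
have kerf Z : val_submod (in_submod (kermx f) Z) *m f = 0.
  by apply/eqP; rewrite -sub_kermx val_submodP.
have factf Z : val_factmod (in_factmod (kermx f) Z) *m f = Z *m f.
  by rewrite -[in RHS](add_sub_fact_mod (kermx f) Z) mulmxDl kerf add0r.
split; rewrite ?genmxE ?submxMl //.
- apply: submx_trans (addsmxSl _ _).
  by rewrite -[f in (f <= _)%MS]mul1mx -factf val_factmodE -mulmxA submxMl.
- move=> m x; rewrite submx0 mulmxA => /eqP xf0.
  have : (x *m val_factmod 1%:M <= kermx f :&: (kermx f)^C)%MS.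
    by rewrite sub_capmx sub_kermx xf0 eqxx -val_factmodE val_factmodP.
  by rewrite capmx_compl submx0 -val_factmodE val_factmod_eq0 => /eqP.
- move=> a; rewrite /= mulmxA -val_factmodE factf -!mulmxA hf.
  exact: congmx_refl.
Qed.

Lemma subquot_rep_of_iso (N : rmodule A) : is_iso M N -> exists g, subquot_rep 0 1%:M N g.
Proof.
case=> f [hf /row_freeP [B fB] /row_fullP [B' B'f]].
have eB : B' = B by rewrite -[B']mulmx1 -fB mulmxA B'f mul1mx.
subst B'; exists B; split.
- exact: submx1.
- by apply: submx_trans (addsmxSl _ _); rewrite -fB submxMl.
- move=> m x; rewrite submx0 => /eqP xB0.
  by rewrite -[x]mulmx1 -B'f mulmxA xB0 mul0mx.
- move=> a; rewrite -[mact N a *m B]mul1mx -B'f mulmxA -(mulmxA B f) -hf.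
  by rewrite -!mulmxA fB mulmx1; apply: congmx_refl.
Qed.

End SubquotientPresentation.

Arguments subquot_rep {F A M} U V N g.
Arguments is_submod0 {F A M}.
Arguments is_submod1 {F A M}.
Arguments subquot_rep_id {F A M}.

Section TorsionClass.
Variables (F : fieldType) (A : falgType F) (G : mclass A).
Hypothesis tG : torsion_class G.
Variables (R : realType) (theta : rmodule A -> R).
Hypothesis thetaA : additive_fun theta.

Lemma is_rmod_zeromod : is_rmod (zeromod A).
Proof. by split=> *; rewrite [LHS]flatmx0 [RHS]flatmx0. Qed.

Lemma is_iso_zeromod (N : rmodule A) : mdim N = 0%N -> is_iso (zeromod A) N.
Proof.
move=> N0; exists 0; split.
- by move=> a; rewrite [LHS]flatmx0 [RHS]flatmx0.
- by rewrite /row_free mxrank0.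
- by rewrite /row_full mxrank0 N0.
Qed.

Lemma G_rmod (N : rmodule A) : G N -> is_rmod N.
Proof. by case: tG => GR _ _ _ _; apply: GR. Qed.

Lemma G_iso (N1 N2 : rmodule A) : G N1 -> is_iso N1 N2 -> G N2.
Proof. by case: tG => _ _ Giso _ _; apply: Giso. Qed.

Lemma G_dim0 (N : rmodule A) : mdim N = 0%N -> G N.
Proof. by case: tG => _ G0 _ _ _ N0; apply: G_iso G0 (is_iso_zeromod N0). Qed.

Lemma theta_zeromod : theta (zeromod A) = 0.
Proof.
case: thetaA => thetaI thetaD.
have theta0 N : mdim N = 0%N -> theta N = theta (zeromod A).
  by move=> N0; rewrite (thetaI _ _ is_rmod_zeromod (is_iso_zeromod N0)).
have := thetaD _ _ is_rmod_zeromod (@is_submod0 _ _ (zeromod A)).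
rewrite (theta0 (submod _ _)) ?(theta0 (quotmod _ _)) /= ?mxrank0 //; last first.
  by apply/eqP; rewrite -leqn0 rank_leq_col.
by move/eqP; rewrite -subr_eq subrr eq_sym => /eqP.
Qed.

Lemma theta_dim0 (N : rmodule A) : mdim N = 0%N -> theta N = 0.
Proof.
case: thetaA => thetaI _ N0.
by rewrite -(thetaI _ _ is_rmod_zeromod (is_iso_zeromod N0)) theta_zeromod.
Qed.

Lemma strict_subobj0 (N : rmodule A) : strict_subobj G N 0.
Proof.
split; first by split; [exact: is_submod0 | apply: G_dim0; rewrite /= mxrank0].
by move=> B _; apply: G_dim0; rewrite /= cap0mx mxrank0.
Qed.

Section Ambient.
Variable M : rmodule A.
Hypothesis rM : is_rmod M.
Local Notation n := (mdim M).
Local Notation sm := (is_submod M).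

Definition G_sq (U V : 'M[F]_n) := G (subquot U V).
Definition theta_sq (U V : 'M[F]_n) := theta (subquot U V).

Lemma G_rep (U W : 'M[F]_n) N g : sm U -> sm W -> (U <= W)%MS ->
  subquot_rep U W N g -> G N <-> G_sq U W.
Proof.
move=> sU sW sUW rep; have rep' := subquot_rep_subquot sU sW sUW.
split=> GN; apply: G_iso GN _;
  [exact: subquot_rep_iso sU rep rep' | exact: subquot_rep_iso sU rep' rep].
Qed.

Lemma theta_rep (U W : 'M[F]_n) N g : sm U -> sm W -> (U <= W)%MS ->
  subquot_rep U W N g -> theta N = theta_sq U W.
Proof.
move=> sU sW sUW rep; have rep' := subquot_rep_subquot sU sW sUW.
case: thetaA => thetaI _; apply: thetaI; first exact: subquot_rep_rmod rM sU rep.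
exact: subquot_rep_iso sU rep rep'.
Qed.

Lemma G_sq_eqmx (U W U' W' : 'M[F]_n) : sm U -> sm W -> sm U' -> sm W' -> (U <= W)%MS ->
  (U == U')%MS -> (W == W')%MS -> G_sq U W -> G_sq U' W'.
Proof.
move=> sU sW sU' sW' sUW eU eW.
have rep := eqmx_subquot_rep eU eW (subquot_rep_subquot sU sW sUW).
have sUW' : (U' <= W')%MS by move/eqmxP: eU => <-; move/eqmxP: eW => <-.
exact: (G_rep sU' sW' sUW' rep).1.
Qed.

Lemma theta_sq_eqmx (U W U' W' : 'M[F]_n) : sm U -> sm W -> sm U' -> sm W' -> (U <= W)%MS ->
  (U == U')%MS -> (W == W')%MS -> theta_sq U W = theta_sq U' W'.
Proof.
move=> sU sW sU' sW' sUW eU eW.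
have rep := eqmx_subquot_rep eU eW (subquot_rep_subquot sU sW sUW).
have sUW' : (U' <= W')%MS by move/eqmxP: eU => <-; move/eqmxP: eW => <-.
exact: theta_rep sU' sW' sUW' rep.
Qed.

Lemma G_sq_eqr (U W W' : 'M[F]_n) : sm U -> sm W -> sm W' -> (U <= W)%MS ->
  (W == W')%MS -> G_sq U W -> G_sq U W'.
Proof.
by move=> sU sW sW' sUW eW; apply: (G_sq_eqmx sU sW sU sW' sUW _ eW); rewrite submx_refl.
Qed.

Lemma G_sq_le (U W : 'M[F]_n) : sm U -> sm W -> (U <= W)%MS -> (W <= U)%MS -> G_sq U W.
Proof.
move=> sU sW sUW sWU; apply: G_dim0; apply/eqP.
by rewrite (subquot_rep_dim0 (subquot_rep_subquot sU sW sUW)).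
Qed.

Lemma theta_sq_le (U W : 'M[F]_n) : sm U -> sm W -> (U <= W)%MS -> (W <= U)%MS ->
  theta_sq U W = 0.
Proof.
move=> sU sW sUW sWU; apply: theta_dim0; apply/eqP.
by rewrite (subquot_rep_dim0 (subquot_rep_subquot sU sW sUW)).
Qed.

Lemma subquot_rep_lift (U W V : 'M[F]_n) N g : sm U -> sm V -> (U <= V)%MS -> (V <= W)%MS ->
  subquot_rep U W N g ->
  exists2 Y : 'M[F]_(mdim N), is_submod N Y & (Y *m g + U == V)%MS.
Proof.
move=> sU sV sUV sVW rep; have [x ex] := subquot_rep_decomp rep sVW.
have egx : (<<x>>%MS *m g :=: x *m g)%MS by apply/eqmxMr/genmxE.
have xV : (<<x>>%MS *m g <= V)%MS.
  by rewrite egx; apply: congmx_sub (congmx_sym ex) sUV (submx_refl V).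
have Vx : (V <= <<x>>%MS *m g + U)%MS.
  by apply: submx_trans (congmx_adds ex) _; rewrite addsmxS ?egx.
exists <<x>>%MS; first exact: (is_submod_rep_preimg rep sV xV Vx).
by rewrite Vx addsmx_sub xV sUV.
Qed.

Section Chain.
Variables (U V W : 'M[F]_n).
Hypotheses (sU : sm U) (sV : sm V) (sW : sm W) (sUV : (U <= V)%MS) (sVW : (V <= W)%MS).

Let sUW := submx_trans sUV sVW.
Let rep := subquot_rep_subquot sU sW sUW.

(* The third isomorphism theorem: [V / U] is a subobject of [W / U] with quotient [W / V]. *)
Let third_iso : exists2 Y, is_submod (subquot U W) Y &
  (exists gS, subquot_rep U V (submod (subquot U W) Y) gS) /\
  (exists gQ, subquot_rep V W (quotmod (subquot U W) Y) gQ).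
Proof.
have [Y sY eY] := subquot_rep_lift sU sV sUV sVW rep.
exists Y => //; split; eexists.
  by apply: eqmx_subquot_rep (subquot_rep_submod rep sY); rewrite ?submx_refl.
by apply: eqmx_subquot_rep (subquot_rep_quotmod rep sY); rewrite ?submx_refl.
Qed.

Lemma G_sq_quot : G_sq U W -> G_sq V W.
Proof.
have [Y sY [_ [gQ repQ]]] := third_iso; rewrite -(G_rep sV sW sVW repQ) => GUW.
by case: tG => _ _ _ Gquot _; apply: Gquot GUW sY.
Qed.

Lemma G_sq_ext : G_sq U V -> G_sq V W -> G_sq U W.
Proof.
have [Y sY [[gS repS] [gQ repQ]]] := third_iso.
rewrite -(G_rep sU sV sUV repS) -(G_rep sV sW sVW repQ) => GS GQ.
case: tG => _ _ _ _ Gext; apply: Gext GS GQ => //.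
exact: subquot_rep_rmod rM sU rep.
Qed.

Lemma theta_sq_add : theta_sq U W = theta_sq U V + theta_sq V W.
Proof.
have [Y sY [[gS repS] [gQ repQ]]] := third_iso.
case: thetaA => _ thetaD; rewrite /theta_sq (thetaD _ Y) //; last first.
  exact: subquot_rep_rmod rM sU rep.
by rewrite (theta_rep sU sV sUV repS) (theta_rep sV sW sVW repQ).
Qed.

End Chain.

Lemma G_sq_cap_adds (V Y : 'M[F]_n) : sm V -> sm Y ->
  G_sq (V :&: Y)%MS Y <-> G_sq V (Y + V)%MS.
Proof.
move=> sV sY; have sVY := is_submod_cap sV sY.
have rep := subquot_rep_adds (subquot_rep_subquot sVY sY (capmxSr _ _)).
exact: G_rep sV (is_submod_adds sY sV) (addsmxSr _ _) rep.
Qed.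

Lemma theta_sq_cap_adds (V Y : 'M[F]_n) : sm V -> sm Y ->
  theta_sq (V :&: Y)%MS Y = theta_sq V (Y + V)%MS.
Proof.
move=> sV sY; have sVY := is_submod_cap sV sY.
have rep := subquot_rep_adds (subquot_rep_subquot sVY sY (capmxSr _ _)).
exact: theta_rep sV (is_submod_adds sY sV) (addsmxSr _ _) rep.
Qed.

(* [V / U] is a strict subobject of [W / U]. *)
Definition strict_sq (U W V : 'M[F]_n) :=
  [/\ sm V, (U <= V)%MS, (V <= W)%MS, G_sq U V &
      forall B, sm B -> (U <= B)%MS -> (B <= W)%MS -> G_sq U B -> G_sq U (V :&: B)%MS].

Lemma strict_sq_top (U W : 'M[F]_n) : sm U -> sm W -> (U <= W)%MS -> G_sq U W ->
  strict_sq U W W.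
Proof.
move=> sU sW sUW GUW; split=> // B sB sUB sBW GUB.
apply: G_sq_eqr sU sB (is_submod_cap sW sB) sUB _ GUB.
by rewrite capmxSr sub_capmx sBW submx_refl.
Qed.

Lemma capmx_capl (X V B : 'M[F]_n) : (X <= V)%MS -> (X :&: (V :&: B) == X :&: B)%MS.
Proof.
move=> sXV; rewrite capmxS ?submx_refl ?capmxSr //=.
by rewrite !sub_capmx capmxSl capmxSr (submx_trans (capmxSl _ _) sXV).
Qed.

Lemma strict_sq_trans (U W V X : 'M[F]_n) : sm U ->
  strict_sq U W V -> strict_sq U V X -> strict_sq U W X.
Proof.
move=> sU [sV sUV sVW GUV stV] [sX sUX sXV GUX stX].
split=> //; first exact: submx_trans sXV sVW.
move=> B sB sUB sBW GUB; have sVB := is_submod_cap sV sB.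
have sUVB : (U <= V :&: B)%MS by rewrite sub_capmx sUV sUB.
have := stX _ sVB sUVB (capmxSl _ _) (stV B sB sUB sBW GUB).
apply: G_sq_eqr (is_submod_cap sX sVB) (is_submod_cap sX sB) _ (capmx_capl _ sXV) => //.
by rewrite sub_capmx sUX.
Qed.

Lemma strict_sq_restr (U W V X : 'M[F]_n) : sm V -> (X <= V)%MS -> (V <= W)%MS ->
  strict_sq U W X -> strict_sq U V X.
Proof.
move=> sV sXV sVW [sX sUX _ GUX stX]; split=> // B sB sUB sBV.
exact: stX B sB sUB (submx_trans sBV sVW).
Qed.

Lemma strict_sq_cap (U W X Y : 'M[F]_n) :
  strict_sq U W X -> strict_sq U W Y -> strict_sq U W (X :&: Y)%MS.
Proof.
move=> [sX sUX sXW GUX stX] [sY sUY sYW GUY stY]; split.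
- exact: is_submod_cap.
- by rewrite sub_capmx sUX.
- exact: submx_trans (capmxSl _ _) sXW.
- exact: stX.
move=> B sB sUB sBW GUB; rewrite -capmxA; apply: stX.
- exact: is_submod_cap.
- by rewrite sub_capmx sUY.
- exact: submx_trans (capmxSr _ _) sBW.
exact: stY.
Qed.

Lemma capmx_adds_modl (X B V : 'M[F]_n) : (V <= X)%MS -> (X :&: (B + V) == X :&: B + V)%MS.
Proof.
move=> sVX; apply/eqmxP; rewrite [(X :&: _)%MS]capmxC (addsmxC B V).
by apply: eqmx_trans (eqmx_sym (matrix_modl B sVX)) _; rewrite addsmxC capmxC.
Qed.

Lemma strict_sq_lift (U W V X : 'M[F]_n) : sm U ->
  strict_sq U W V -> strict_sq V W X -> strict_sq U W X.
Proof.
move=> sU [sV sUV sVW GUV stV] [sX sVX sXW GVX stX].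
have sUX := submx_trans sUV sVX.
split=> //; first exact: G_sq_ext sU sV sX sUV sVX GUV GVX.
move=> B sB sUB sBW GUB; have sXB := is_submod_cap sX sB.
have sVXB := is_submod_cap sV sXB; have sBV := is_submod_adds sB sV.
have sUVB : (U <= V :&: B)%MS by rewrite sub_capmx sUV.
have GUVB : G_sq U (V :&: (X :&: B))%MS.
  apply: G_sq_eqr sU (is_submod_cap sV sB) sVXB sUVB _ (stV B sB sUB sBW GUB).
  rewrite capmxA (capmxC V X) -capmxA sub_capmx submx_refl capmxSr !andbT.
  exact: submx_trans (capmxSl _ _) sVX.
have GVBV : G_sq V (B + V)%MS.
  apply/G_sq_cap_adds => //; apply: G_sq_quot sU (is_submod_cap sV sB) sB sUVB _ GUB.
  exact: capmxSr.
have GVXBV : G_sq V (X :&: B + V)%MS.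
  have sBVW : (B + V <= W)%MS by rewrite addsmx_sub sBW.
  have sVXBV : (V <= X :&: (B + V))%MS by rewrite sub_capmx sVX addsmxSr.
  apply: (G_sq_eqr sV (is_submod_cap sX sBV) (is_submod_adds sXB sV) sVXBV).
    exact: capmx_adds_modl.
  exact: stX _ sBV (addsmxSr _ _) sBVW GVBV.
have GVXB_XB : G_sq (V :&: (X :&: B))%MS (X :&: B)%MS by apply/G_sq_cap_adds.
by apply: G_sq_ext sU sVXB sXB _ (capmxSr _ _) GUVB GVXB_XB; rewrite !sub_capmx sUV sUX.
Qed.

Lemma strict_sq_adds (U W V X : 'M[F]_n) : sm U ->
  strict_sq U W V -> strict_sq U W X -> strict_sq V W (V + X)%MS.
Proof.
move=> sU [sV sUV sVW GUV stV] [sX sUX sXW GUX stX].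
split; rewrite ?addsmxSl ?addsmx_sub ?sVW //; first exact: is_submod_adds.
  have sUVX : (U <= V :&: X)%MS by rewrite sub_capmx sUV.
  rewrite addsmxC; apply/G_sq_cap_adds => //.
  exact: G_sq_quot sU (is_submod_cap sV sX) sX sUVX (capmxSr _ _) GUX.
move=> B sB sVB sBW GVB; have sUB := submx_trans sUV sVB.
have sXB := is_submod_cap sX sB.
have GUXB := stX B sB sUB sBW (G_sq_ext sU sV sB sUV sVB GUV GVB).
have sUVXB : (U <= V :&: (X :&: B))%MS by rewrite !sub_capmx sUV sUX.
have GVXB : G_sq V (X :&: B + V)%MS.
  apply/G_sq_cap_adds => //.
  exact: G_sq_quot sU (is_submod_cap sV sXB) sXB sUVXB (capmxSr _ _) GUXB.
rewrite addsmxC in GVXB.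
apply: (G_sq_eqr sV (is_submod_adds sV sXB) _ (addsmxSl _ _) _ GVXB).
  exact: is_submod_cap (is_submod_adds sV sX) sB.
by apply/eqmxP; apply: matrix_modl.
Qed.

Definition Pbar_sq (U W : 'M[F]_n) :=
  G_sq U W /\ forall V, strict_sq U W V -> 0 <= theta_sq V W.
Definition P_sq (U W : 'M[F]_n) :=
  G_sq U W /\ ((W <= U)%MS \/ forall V, strict_sq U W V -> ~~ (W <= V)%MS -> 0 < theta_sq V W).
Definition W_sq (U W : 'M[F]_n) :=
  [/\ G_sq U W, theta_sq U W = 0 & forall V, strict_sq U W V -> theta_sq U V <= 0].

Lemma P_sq_Pbar_sq (U W : 'M[F]_n) : sm W -> P_sq U W -> Pbar_sq U W.
Proof.
move=> sW [GUW PUW]; split=> // V stV; have [sV sUV sVW _ _] := stV.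
have [sWV | nWV] := boolP (W <= V)%MS; first by rewrite (theta_sq_le sV sW sVW sWV).
case: PUW => [sWU | PUW]; last exact: ltW (PUW V stV nWV).
by rewrite (submx_trans sWU sUV) in nWV.
Qed.

Lemma W_sq_Pbar_sq (U W : 'M[F]_n) : sm U -> sm W -> W_sq U W -> Pbar_sq U W.
Proof.
move=> sU sW [GUW thetaUW WUW]; split=> // V stV; have := WUW V stV.
case: stV => sV sUV sVW _ _.
move: thetaUW; rewrite (theta_sq_add sU sV sW sUV sVW) => /eqP.
by rewrite addrC addr_eq0 => /eqP ->; rewrite oppr_ge0.
Qed.

Lemma Pbar_sq_quot (U W V : 'M[F]_n) : sm U -> sm W ->
  Pbar_sq U W -> strict_sq U W V -> Pbar_sq V W.
Proof.
move=> sU sW [GUW PUW] stV; have [sV sUV sVW _ _] := stV.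
split; first exact: G_sq_quot sU sV sW sUV sVW GUW.
by move=> X stX; apply/PUW/(strict_sq_lift sU stV stX).
Qed.

Lemma Pbar_sq_ext (U W V : 'M[F]_n) : sm U -> sm W -> G_sq U W -> strict_sq U W V ->
  Pbar_sq U V -> Pbar_sq V W -> Pbar_sq U W.
Proof.
move=> sU sW GUW stV [_ PUV] [_ PVW]; split=> // X stX.
have [sV sUV sVW _ _] := stV; have [sX sUX sXW _ _] := stX.
have sVX := is_submod_adds sV sX.
have sVXW : (V + X <= W)%MS by rewrite addsmx_sub sVW.
rewrite (theta_sq_add sX sVX sW (addsmxSr _ _) sVXW) -theta_sq_cap_adds //.
apply: addr_ge0; last exact/PVW/(strict_sq_adds sU stV stX).
by apply/PUV/(strict_sq_restr sV (capmxSr _ _) sVW); apply: strict_sq_cap.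
Qed.

(* [V0] is minimal among the strict subobjects with [theta (W / V0) = 0]: minimality
   makes [V0 / U] satisfy the P-condition, and [Pbar] for [W / U] makes [W / V0] satisfy
   the W-condition. *)
Lemma Pbar_sq_decomp (U W : 'M[F]_n) : sm U -> sm W -> (U <= W)%MS -> Pbar_sq U W ->
  exists V, [/\ strict_sq U W V, P_sq U V & W_sq V W].
Proof.
move=> sU sW sUW [GUW PUW].
have [V0 [stV0 thetaV0] minV0] :=
  @submx_minimal _ _ _ (fun V => strict_sq U W V /\ theta_sq V W = 0) W
    (conj (strict_sq_top sU sW sUW GUW) (theta_sq_le sW sW (submx_refl W) (submx_refl W))).
have [sV0 sUV0 sV0W GUV0 _] := stV0.
exists V0; split=> //.
  split=> //; right=> X stX nV0X; have stXW := strict_sq_trans sU stV0 stX.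
  have [sX sUX sXV0 _ _] := stX.
  have := PUW X stXW; rewrite (theta_sq_add sX sV0 sW sXV0 sV0W) thetaV0 addr0.
  rewrite le0r => /orP [/eqP thetaX0 | //]; move: nV0X; rewrite minV0 //.
  by split=> //; rewrite (theta_sq_add sX sV0 sW sXV0 sV0W) thetaV0 thetaX0 addr0.
split=> //; first exact: G_sq_quot sU sV0 sW sUV0 sV0W GUW.
move=> X stX; have := PUW X (strict_sq_lift sU stV0 stX).
have [sX sV0X sXW _ _] := stX.
move: thetaV0; rewrite (theta_sq_add sV0 sX sW sV0X sXW) => /eqP.
by rewrite addr_eq0 => /eqP ->; rewrite oppr_le0.
Qed.

(* A quotient [V1 / (V1 :&: V2) ~ (V1 + V2) / V2] would have positive [theta]
   by the P-condition on [V1 / U] and nonpositive [theta] by the W-condition on [W / V2]. *)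
Lemma P_sq_W_sq_le (U W V1 V2 : 'M[F]_n) : sm U ->
  strict_sq U W V1 -> P_sq U V1 -> strict_sq U W V2 -> W_sq V2 W -> (V1 <= V2)%MS.
Proof.
move=> sU stV1 [_ PV1] stV2 [_ _ WV2].
have [sV1 sUV1 sV1W _ _] := stV1; have [sV2 sUV2 _ _ _] := stV2.
apply/negPn/negP => nV12; case: PV1 => [sV1U | PV1].
  by rewrite (submx_trans sV1U sUV2) in nV12.
have stI := strict_sq_restr sV1 (capmxSl _ _) sV1W (strict_sq_cap stV1 stV2).
have := PV1 _ stI; rewrite sub_capmx submx_refl nV12 => /(_ isT).
rewrite capmxC theta_sq_cap_adds // addsmxC => pos.
by have := lt_le_trans pos (WV2 _ (strict_sq_adds sU stV2 stV1)); rewrite ltxx.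
Qed.

Section Transfer.
Variables (U W : 'M[F]_n) (N : rmodule A) (g : 'M[F]_(mdim N, n)).
Hypotheses (sU : sm U) (sW : sm W) (sUW : (U <= W)%MS) (rep : subquot_rep U W N g).

Lemma rep_img_le (Y : 'M[F]_(mdim N)) : (Y *m g + U <= W)%MS.
Proof. by case: rep => gW _ _ _; rewrite addsmx_sub sUW (submx_trans (submxMl _ _) gW). Qed.

Lemma G_submod_rep (Y : 'M[F]_(mdim N)) : is_submod N Y ->
  G (submod N Y) <-> G_sq U (Y *m g + U)%MS.
Proof.
move=> sY; have sV := is_submod_rep_img rep sU sY.
exact: (G_rep sU sV (addsmxSr _ _) (subquot_rep_submod rep sY)).
Qed.

Lemma theta_submod_rep (Y : 'M[F]_(mdim N)) : is_submod N Y ->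
  theta (submod N Y) = theta_sq U (Y *m g + U)%MS.
Proof.
move=> sY; have sV := is_submod_rep_img rep sU sY.
exact: (theta_rep sU sV (addsmxSr _ _) (subquot_rep_submod rep sY)).
Qed.

Lemma theta_quotmod_rep (Y : 'M[F]_(mdim N)) : is_submod N Y ->
  theta (quotmod N Y) = theta_sq (Y *m g + U)%MS W.
Proof.
move=> sY; have sV := is_submod_rep_img rep sU sY.
exact: (theta_rep sV sW (rep_img_le Y) (subquot_rep_quotmod rep sY)).
Qed.

Lemma strict_subobj_rep (Y : 'M[F]_(mdim N)) :
  strict_subobj G N Y -> strict_sq U W (Y *m g + U)%MS.
Proof.
move=> [[sY GY] stY]; have sV := is_submod_rep_img rep sU sY.
split; rewrite ?addsmxSr ?rep_img_le //; first exact/(G_submod_rep sY).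
move=> B sB sUB sBW GUB; have [Z sZ eZ] := subquot_rep_lift sU sB sUB sBW rep.
have sZ' := is_submod_rep_img rep sU sZ.
have GZ : G (submod N Z).
  by apply/(G_submod_rep sZ); apply: (G_sq_eqr sU sB sZ' sUB _ GUB); rewrite andbC.
have sYZ := is_submod_cap sY sZ.
have := (G_submod_rep sYZ).1 (stY Z (conj sZ GZ)).
apply: (G_sq_eqr sU (is_submod_rep_img rep sU sYZ) (is_submod_cap sV sB) (addsmxSr _ _)).
apply/eqmxP; apply: eqmx_trans (eqmxP (subquot_rep_cap rep _ _)) _.
exact: cap_eqmx (eqmx_refl _) (eqmxP eZ).
Qed.

Lemma rep_strict_subobj (V : 'M[F]_n) (Y : 'M[F]_(mdim N)) :
  strict_sq U W V -> (Y *m g + U == V)%MS -> strict_subobj G N Y.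
Proof.
move=> [sV sUV sVW GUV stV] /andP [sYV sVY].
have sY : is_submod N Y.
  move: (sYV); rewrite addsmx_sub => /andP [sYgV _].
  exact: (is_submod_rep_preimg rep sV sYgV sVY).
have sY' := is_submod_rep_img rep sU sY.
split.
  split=> //; apply/(G_submod_rep sY).
  by apply: (G_sq_eqr sU sV sY' sUV _ GUV); rewrite sVY.
move=> B [sB GB]; have sB' := is_submod_rep_img rep sU sB.
have sYB := is_submod_cap sY sB; apply/(G_submod_rep sYB).
have := stV _ sB' (addsmxSr _ _) (rep_img_le B) ((G_submod_rep sB).1 GB).
have sUVB : (U <= V :&: (B *m g + U))%MS by rewrite sub_capmx sUV addsmxSr.
apply: (G_sq_eqr sU (is_submod_cap sV sB') (is_submod_rep_img rep sU sYB) sUVB).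
apply/eqmxP; apply: eqmx_sym; apply: eqmx_trans (eqmxP (subquot_rep_cap rep _ _)) _.
by apply: cap_eqmx (eqmx_refl _); apply/eqmxP; rewrite sYV.
Qed.

Lemma strict_sq_rep (V : 'M[F]_n) : strict_sq U W V ->
  exists2 Y : 'M[F]_(mdim N), strict_subobj G N Y & (Y *m g + U == V)%MS.
Proof.
move=> stV; have [sV sUV sVW _ _] := stV.
have [Y _ eY] := subquot_rep_lift sU sV sUV sVW rep.
by exists Y => //; apply: rep_strict_subobj stV eY.
Qed.

Lemma theta_submod_rep_eqmx (V : 'M[F]_n) (Y : 'M[F]_(mdim N)) :
  is_submod N Y -> sm V -> (Y *m g + U == V)%MS -> theta (submod N Y) = theta_sq U V.
Proof.
move=> sY sV eY; rewrite theta_submod_rep //.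
apply: (theta_sq_eqmx sU (is_submod_rep_img rep sU sY) sU sV (addsmxSr _ _) _ eY).
by rewrite submx_refl.
Qed.

Lemma theta_quotmod_rep_eqmx (V : 'M[F]_n) (Y : 'M[F]_(mdim N)) :
  is_submod N Y -> sm V -> (Y *m g + U == V)%MS -> theta (quotmod N Y) = theta_sq V W.
Proof.
move=> sY sV eY; rewrite theta_quotmod_rep //.
apply: (theta_sq_eqmx (is_submod_rep_img rep sU sY) sW sV sW (rep_img_le Y) eY).
by rewrite submx_refl.
Qed.

Lemma Pbar_rep : Pbar G theta N <-> Pbar_sq U W.
Proof.
rewrite /Pbar /Pbar_sq (G_rep sU sW sUW rep); split=> -[GUW PN]; split=> //.
  move=> V stV; have [Y stY eY] := strict_sq_rep stV; have [sV _ _ _ _] := stV.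
  by rewrite -(theta_quotmod_rep_eqmx stY.1.1 sV eY); apply: PN.
move=> Y stY; rewrite theta_quotmod_rep //; last exact: stY.1.1.
exact/PN/strict_subobj_rep.
Qed.

Lemma Ptheta_rep : Ptheta G theta N <-> P_sq U W.
Proof.
rewrite /Ptheta /P_sq (G_rep sU sW sUW rep); split=> -[GUW PN]; split=> //.
  case: PN => [/eqP N0 | PN]; [by left; rewrite -(subquot_rep_dim0 rep) | right].
  move=> V stV nWV; have [Y stY eY] := strict_sq_rep stV; have [sV _ _ _ _] := stV.
  have sY := stY.1.1; rewrite -(theta_quotmod_rep_eqmx sY sV eY); apply: (PN _ stY).
  rewrite (subquot_rep_dim0 (subquot_rep_quotmod rep sY)); apply: contra nWV => sWY.
  by apply: submx_trans sWY _; case/andP: eY.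
case: PN => [WU | PN]; [by left; apply/eqP; rewrite (subquot_rep_dim0 rep) | right].
move=> Y stY nQ; have sY := stY.1.1; rewrite theta_quotmod_rep //.
apply: PN (strict_subobj_rep stY) _.
by rewrite -(subquot_rep_dim0 (subquot_rep_quotmod rep sY)).
Qed.

Lemma Wtheta_rep : Wtheta G theta N <-> W_sq U W.
Proof.
have GNU := G_rep sU sW sUW rep.
rewrite /Wtheta /W_sq (theta_rep sU sW sUW rep).
split=> -[GN thetaUW WN]; (split; first exact/GNU) => //.
  move=> V stV; have [Y stY eY] := strict_sq_rep stV; have [sV _ _ _ _] := stV.
  by rewrite -(theta_submod_rep_eqmx stY.1.1 sV eY); apply: WN.
move=> Y stY; rewrite theta_submod_rep //; last exact: stY.1.1.
exact/WN/strict_subobj_rep.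
Qed.

End Transfer.

Lemma strict_subobj_sq (V : 'M[F]_n) : strict_subobj G M V -> strict_sq 0 1%:M V.
Proof.
move=> stV; have := strict_subobj_rep is_submod0 (sub0mx _ _) subquot_rep_id stV.
by rewrite mulmx1 addsmx0_id.
Qed.

Lemma strict_sq_subobj (V Y : 'M[F]_n) :
  strict_sq 0 1%:M V -> (Y == V)%MS -> strict_subobj G M Y.
Proof.
move=> stV eYV; apply: (rep_strict_subobj is_submod0 (sub0mx _ _) subquot_rep_id stV).
by rewrite mulmx1 addsmx0_id.
Qed.

Lemma strict_subobj_eqmx (U V : 'M[F]_n) :
  strict_subobj G M U -> (V == U)%MS -> strict_subobj G M V.
Proof. by move/strict_subobj_sq; apply: strict_sq_subobj. Qed.

Lemma Pbar_whole : Pbar G theta M <-> Pbar_sq 0 1%:M.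
Proof. exact: Pbar_rep is_submod0 is_submod1 (sub0mx _ _) subquot_rep_id. Qed.

Lemma Ptheta_whole : Ptheta G theta M <-> P_sq 0 1%:M.
Proof. exact: Ptheta_rep is_submod0 is_submod1 (sub0mx _ _) subquot_rep_id. Qed.

Lemma Wtheta_whole : Wtheta G theta M <-> W_sq 0 1%:M.
Proof. exact: Wtheta_rep is_submod0 is_submod1 (sub0mx _ _) subquot_rep_id. Qed.

Lemma Pbar_submod (U : 'M[F]_n) : sm U -> Pbar G theta (submod M U) <-> Pbar_sq 0 U.
Proof. by move=> sU; apply: Pbar_rep is_submod0 sU (sub0mx _ _) (subquot_rep_submod0 sU). Qed.

Lemma Ptheta_submod (U : 'M[F]_n) : sm U -> Ptheta G theta (submod M U) <-> P_sq 0 U.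
Proof. by move=> sU; apply: Ptheta_rep is_submod0 sU (sub0mx _ _) (subquot_rep_submod0 sU). Qed.

Lemma Pbar_quotmod (U : 'M[F]_n) : sm U -> Pbar G theta (quotmod M U) <-> Pbar_sq U 1%:M.
Proof. by move=> sU; apply: Pbar_rep sU is_submod1 (submx1 _) (subquot_rep_quotmod1 sU). Qed.

Lemma Wtheta_quotmod (U : 'M[F]_n) : sm U -> Wtheta G theta (quotmod M U) <-> W_sq U 1%:M.
Proof. by move=> sU; apply: Wtheta_rep sU is_submod1 (submx1 _) (subquot_rep_quotmod1 sU). Qed.

Lemma Pbar_decomposition : Pbar G theta M ->
  exists U : 'M[F]_n,
    [/\ strict_subobj G M U, Ptheta G theta (submod M U), Wtheta G theta (quotmod M U) &
        forall U' : 'M[F]_n, strict_subobj G M U' -> Ptheta G theta (submod M U') ->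
          Wtheta G theta (quotmod M U') -> (U' == U)%MS].
Proof.
move/Pbar_whole/(Pbar_sq_decomp is_submod0 is_submod1 (sub0mx _ _)) => [V [stV PV WV]].
have [sV _ _ _ _] := stV; have eVV : (V == V)%MS by rewrite submx_refl.
exists V; split; [exact: (strict_sq_subobj stV eVV) | exact/(Ptheta_submod sV) |
  exact/(Wtheta_quotmod sV) |].
move=> U' stU' PU' WU'; have sU' := stU'.1.1; have stU'01 := strict_subobj_sq stU'.
apply/andP; split.
  exact: (P_sq_W_sq_le is_submod0 stU'01 ((Ptheta_submod sU').1 PU') stV WV).
exact: (P_sq_W_sq_le is_submod0 stV PV stU'01 ((Wtheta_quotmod sU').1 WU')).
Qed.

Lemma Ptheta_Pbar : Ptheta G theta M -> Pbar G theta M.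
Proof. by move/Ptheta_whole/(P_sq_Pbar_sq is_submod1)/Pbar_whole. Qed.

Lemma Wtheta_Pbar : Wtheta G theta M -> Pbar G theta M.
Proof. by move/Wtheta_whole/(W_sq_Pbar_sq is_submod0 is_submod1)/Pbar_whole. Qed.

Lemma Pbar_iso (N : rmodule A) : Pbar G theta M -> is_iso M N -> Pbar G theta N.
Proof.
move=> /Pbar_whole PM /subquot_rep_of_iso [g rep].
exact/(Pbar_rep is_submod0 is_submod1 (sub0mx _ _) rep).
Qed.

Lemma Pbar_strict_quot (U : 'M[F]_n) :
  Pbar G theta M -> strict_subobj G M U -> Pbar G theta (quotmod M U).
Proof.
move=> /Pbar_whole PM stU; apply/(Pbar_quotmod stU.1.1).
exact: Pbar_sq_quot is_submod0 is_submod1 PM (strict_subobj_sq stU).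
Qed.

Lemma Pbar_strict_ext (U : 'M[F]_n) : G M -> strict_subobj G M U ->
  Pbar G theta (submod M U) -> Pbar G theta (quotmod M U) -> Pbar G theta M.
Proof.
move=> GM stU; have sU := stU.1.1; move/(Pbar_submod sU) => PS /(Pbar_quotmod sU) PQ.
apply/Pbar_whole/(Pbar_sq_ext is_submod0 is_submod1 _ (strict_subobj_sq stU) PS PQ).
exact/(G_rep is_submod0 is_submod1 (sub0mx _ _) subquot_rep_id).
Qed.

Lemma strict_morph_val_submod (U : 'M[F]_n) : G M -> strict_subobj G M U ->
  strict_morph G (submod M U) M (val_submod 1%:M).
Proof.
move=> GM stU; have [[sU GU] _] := stU.
split=> //; first exact: is_hom_val_submod.
  have /eqP -> : kermx (val_submod (U := U) 1%:M) == 0.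
    by rewrite kermx_eq0 /row_free val_submod1.
  exact: strict_subobj0.
by apply: strict_subobj_eqmx stU _; apply/eqmxP; apply: eqmx_trans (genmxE _) (val_submod1 _).
Qed.

(* The image of a strict morphism [f : X -> M] is a strict subobject of [M], so its
   [theta] is [<= 0] when [M] is in [W(theta)]; it is [> 0] when [X] is in [P(theta)]
   unless the image is zero. *)
Lemma Wtheta_perp : Wtheta G theta M -> perp G (Ptheta G theta) M.
Proof.
move=> WM; split; first by case: WM.
move=> X f [_ PX] [_ _ hf stK stI]; have sI := stI.1.1.
have repI := subquot_rep_image hf.
have [_ _ /(_ _ (strict_subobj_sq stI))] := Wtheta_whole.1 WM.
rewrite -(theta_rep is_submod0 sI (sub0mx _ _) repI) => thetaI.
case: PX => [X0 | PX].
  by apply/eqP; rewrite -mxrank_eq0 -leqn0 -X0 rank_leq_row.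
have [Q0 | Q0] := boolP (mdim (quotmod X (kermx f)) == 0%N).
  by move: Q0; rewrite (subquot_rep_dim0 repI) genmxE submx0 => /eqP.
by have := lt_le_trans (PX _ stK Q0) thetaI; rewrite ltxx.
Qed.

(* The inclusion of the [P(theta)]-part [U] of [M] is a strict morphism, hence zero. *)
Lemma perp_Pbar_Wtheta :
  perp G (Ptheta G theta) M -> Pbar G theta M -> Wtheta G theta M.
Proof.
move=> [GM perpM] PM; have [U [stU PU WU _]] := Pbar_decomposition PM.
have sU := stU.1.1.
have U0 : (U == (0 : 'M[F]_n))%MS.
  have f0 := perpM _ _ PU (strict_morph_val_submod GM stU).
  by rewrite sub0mx andbT -(val_submod1 U) f0 sub0mx.
have e11 : ((1%:M : 'M[F]_n) == 1%:M)%MS by rewrite submx_refl.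
have rep := eqmx_subquot_rep U0 e11 (subquot_rep_quotmod1 sU).
exact/Wtheta_whole/(Wtheta_rep is_submod0 is_submod1 (sub0mx _ _) rep).
Qed.

End Ambient.

Lemma Pbar_pseudo_torsion : pseudo_torsion G (Pbar G theta).
Proof.
split.
- exists (zeromod A); split=> [|U _]; first by case: tG.
  by rewrite theta_dim0 //; apply/eqP; rewrite -leqn0 rank_leq_col.
- by move=> M [].
- by move=> M N PM; apply: (Pbar_iso (G_rmod PM.1) PM).
- by move=> M U PM; apply: (Pbar_strict_quot (G_rmod PM.1) PM).
- by move=> M U GM; apply: (Pbar_strict_ext (G_rmod GM) GM).
Qed.

End TorsionClass.

Theorem mainTheorem16 (F : fieldType) (A : falgType F) (G : mclass A)
    (R : realType) (theta : rmodule A -> R) :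
  torsion_class G -> additive_fun theta ->
  [/\ (forall M, Pbar G theta M ->
        exists U : 'M[F]_(mdim M),
          [/\ strict_subobj G M U, Ptheta G theta (submod M U),
              Wtheta G theta (quotmod M U) &
              forall U' : 'M[F]_(mdim M),
                strict_subobj G M U' -> Ptheta G theta (submod M U') ->
                Wtheta G theta (quotmod M U') -> (U' == U)%MS]),
      (forall M, perp G (Ptheta G theta) M /\ Pbar G theta M <-> Wtheta G theta M),
      pseudo_torsion G (Pbar G theta),
      (forall M, Ptheta G theta M \/ Wtheta G theta M -> Pbar G theta M) &
      (forall Q : mclass A, pseudo_torsion G Q ->
        (forall M, Ptheta G theta M \/ Wtheta G theta M -> Q M) ->
        forall M, Pbar G theta M -> Q M)].
Proof.
move=> tG thetaA.
have decomp M (PM : Pbar G theta M) := Pbar_decomposition tG thetaA (G_rmod tG PM.1) PM.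
split=> [M | M | | M [PM | WM] | Q [_ _ _ _ Qext] PWQ M PM].
- exact: decomp.
- split=> [[perpM PM] | WM]; first exact: (perp_Pbar_Wtheta tG thetaA (G_rmod tG PM.1) perpM PM).
  have [GM _ _] := WM; have rM := G_rmod tG GM.
  by split; [apply: Wtheta_perp | apply: Wtheta_Pbar].
- exact: Pbar_pseudo_torsion.
- exact: (Ptheta_Pbar tG thetaA (G_rmod tG PM.1) PM).
- by have [GM _ _] := WM; apply: (Wtheta_Pbar tG thetaA (G_rmod tG GM) WM).
- have [U [stU PU WU _]] := decomp M PM.
  by apply: Qext PM.1 stU _ _; apply: PWQ; [left | right].
Qed.
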